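(* Let $n=2k$ with $k\ge1$, let $\lambda\in\mathbb{F}_{2^n}$ and $f(x)=Tr(\lambda x^{2^k+1})$ for $x\in\mathbb{F}_{2^n}$. Then $f$ is negabent if and only if $\lambda+\lambda^{2^k}\neq 1$. Moreover, $f$ is bent-negabent if and only if $\lambda+\lambda^{2^k}\notin\mathbb{F}_2$.
   Context: $Tr=Tr_1^n$ is the absolute trace $\mathbb{F}_{2^n}\to\mathbb{F}_2$. Fix a self-dual basis of $\mathbb{F}_{2^n}$ over $\mathbb{F}_2$ (basis $\{\alpha_i\}$ with $Tr(\alpha_i\alpha_j)=\delta_{ij}$), identify $\mathbb{F}_{2^n}$ with $\mathbb{F}_2^n$ via coordinates, and let $wt(x)$ be the number of nonzero coordinates of $x$. For $g:\mathbb{F}_{2^n}\to\mathbb{F}_2$: $g$ is bent if $\left|\sum_x(-1)^{g(x)+Tr(\mu x)}\right|=2^{n/2}$ for all $\mu$; $g$ is negabent if $\left|\sum_x(-1)^{g(x)+Tr(\mu x)}\mathrm{i}^{wt(x)}\right|=2^{n/2}$ for all $\mu$ ($\mathrm{i}=\sqrt{-1}$); bent-negabent means both. *)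

From HB Require Import structures.
From mathcomp Require Import all_boot all_order all_algebra all_field.
Set Implicit Arguments. Unset Strict Implicit. Unset Printing Implicit Defensive.
Import Order.TTheory GRing.Theory Num.Theory.
Local Open Scope ring_scope.

Section Defs.
Variables (F : finFieldType) (n : nat).

Definition tr (x : F) : F := \sum_(i < n) x ^+ (2 ^ i).

Definition trb (x : F) : bool := tr x != 0.

Definition self_dual (alpha : 'I_n -> F) : Prop :=
  forall i j : 'I_n, tr (alpha i * alpha j) = (i == j)%:R.

(* Hamming weight of the coordinate vector of x in the basis alpha *)
Definition wt (alpha : 'I_n -> F) (x : F) : nat :=
  match [pick c : {ffun 'I_n -> bool} | x == \sum_(i < n) (c i)%:R * alpha i] with
  | Some c => #|[set i | c i]|
  | None => 0%N
  end.

Definition sgn (b : bool) : algC := (-1) ^+ b.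

Definition walsh (g : F -> bool) (mu : F) : algC :=
  \sum_(x : F) sgn (g x (+) trb (mu * x)).

Definition nega_walsh (alpha : 'I_n -> F) (g : F -> bool) (mu : F) : algC :=
  \sum_(x : F) sgn (g x (+) trb (mu * x)) * 'i ^+ wt alpha x.

Definition bent (g : F -> bool) : Prop :=
  forall mu : F, `|walsh g mu| = sqrtC (2 ^+ n).

Definition negabent (alpha : 'I_n -> F) (g : F -> bool) : Prop :=
  forall mu : F, `|nega_walsh alpha g mu| = sqrtC (2 ^+ n).

Definition bent_negabent (alpha : 'I_n -> F) (g : F -> bool) : Prop :=
  bent g /\ negabent alpha g.

End Defs.

From HB Require Import structures.
From mathcomp Require Import all_boot all_order all_algebra all_field.
From mathcomp Require Import ring.
Import GRing.Theory Num.Theory.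
Set Implicit Arguments. Unset Strict Implicit. Unset Printing Implicit Defensive.
Local Open Scope ring_scope.

(* The Walsh transform W of a function h : F -> C (here h = (-1)^f for
   bentness, h = (-1)^f i^wt for negabentness) satisfies
   |W(mu)|^2 = sum_a chi(mu a) r(a) with r the autocorrelation of h, so W is
   flat iff r vanishes off 0.  For the quadratic f one has
   f(a+y) + f(y) = f(a) + Tr(y a^(2^k) c) with c = lam + lam^(2^k), and in a
   self-dual basis i^wt(a+y) i^-wt(y) = i^wt(a) (-1)^Tr(a y).  Hence
   r(a) = (unit) * 2^n * [L a = 0] with L a = a^(2^k) c in the bent case and
   L a = a^(2^k) c + a in the negabent case, and flatness amounts to L having
   trivial kernel, i.e. c <> 0, resp. c <> 1 (as c lies in F_(2^k)). *)

Lemma natr_bool_inj (R : nzRingType) (a b : bool) : (a%:R : R) = b%:R -> a = b.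
Proof. by case: a; case: b => //= /eqP; rewrite ?oner_eq0 // eq_sym oner_eq0. Qed.

Lemma natr_bool_eq0 (R : nzRingType) (b : bool) : ((b%:R : R) == 0) = ~~ b.
Proof. by case: b; rewrite ?oner_eq0 ?eqxx. Qed.

Lemma natr_big_addb (R : nzRingType) (I : finType) (P : I -> bool) :
  2%N \in [pchar R] -> \sum_i (P i)%:R = (\big[addb/false]_i P i)%:R :> R.
Proof.
move=> hc; symmetry; apply: (big_morph (fun b : bool => b%:R)) => // b1 b2.
by case: b1; case: b2; rewrite ?addr0 ?add0r ?(addrr_pchar2 hc).
Qed.

Section Trace.
Variables (F : finFieldType) (n : nat).
Hypothesis hc : 2%N \in [pchar F].
Hypothesis hx : forall x : F, x ^+ (2 ^ n) = x.

Lemma expr2nD (x y : F) i : (x + y) ^+ (2 ^ i) = x ^+ (2 ^ i) + y ^+ (2 ^ i).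
Proof. by rewrite exprDn_pchar // (eq_pnat _ (pcharf_eq hc)) pnatX pnat_id. Qed.

Lemma tr0 : tr n (0 : F) = 0.
Proof. by rewrite /tr big1 // => i _; rewrite expr0n expn_eq0. Qed.

Lemma trD (x y : F) : tr n (x + y) = tr n x + tr n y.
Proof. by rewrite /tr -big_split; apply: eq_bigr => i _; apply: expr2nD. Qed.

Lemma tr_sum (I : finType) (P : pred I) (G : I -> F) :
  tr n (\sum_(i | P i) G i) = \sum_(i | P i) tr n (G i).
Proof. exact: (big_morph _ trD tr0). Qed.

Lemma tr_natbM (b : bool) (x : F) : tr n (b%:R * x) = b%:R * tr n x.
Proof. by case: b; rewrite ?mul1r ?mul0r ?tr0. Qed.

Lemma tr_sqr (x : F) : tr n (x ^+ 2) = tr n x.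
Proof.
rewrite /tr; case: n hx => [|m] hm; first by rewrite !big_ord0.
rewrite big_ord_recr big_ord_recl /= expn0 expr1 -exprM -expnS hm addrC.
by congr (_ + _); apply: eq_bigr => i _; rewrite -exprM -expnS.
Qed.

Lemma tr_exp2n (x : F) j : tr n (x ^+ (2 ^ j)) = tr n x.
Proof. by elim: j => [|j IH]; rewrite ?expn0 ?expr1 // expnSr exprM tr_sqr. Qed.

Lemma sqr_tr (x : F) : tr n x ^+ 2 = tr n x.
Proof.
rewrite -{2}(tr_sqr x); have -> : tr n x ^+ 2 = pFrobenius_aut hc (tr n x) by [].
by rewrite rmorph_sum; apply: eq_bigr => i _; rewrite /= exprAC.
Qed.

Lemma tr_trb (x : F) : tr n x = (trb n x)%:R.
Proof.
rewrite /trb; have := sqr_tr x; case: eqP => [->|/eqP nz] //= h.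
by apply: (mulIf nz); rewrite mul1r -expr2 h.
Qed.

Lemma trbD (x y : F) : trb n (x + y) = trb n x (+) trb n y.
Proof.
apply: (natr_bool_inj (R := F)); rewrite -tr_trb trD !tr_trb.
by case: (trb n x); case: (trb n y); rewrite ?addr0 ?add0r ?(addrr_pchar2 hc).
Qed.

Lemma trb0 : trb n (0 : F) = false.
Proof. by rewrite /trb tr0 eqxx. Qed.

End Trace.

Lemma sgnD (a b : bool) : sgn (a (+) b) = sgn a * sgn b.
Proof. by case: a; case: b; rewrite /sgn ?mulr1 ?mul1r ?mulrNN ?mulr1. Qed.

Lemma conj_sgn b : (sgn b)^* = sgn b.
Proof. by case: b; rewrite /sgn ?rmorph1 ?rmorphN1. Qed.

Lemma sgn_neq0 b : sgn b != 0.
Proof. by case: b; rewrite /sgn ?oppr_eq0 oner_eq0. Qed.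

Lemma sgn_xor (I : finType) (P : I -> bool) :
  sgn (\big[addb/false]_i P i) = \prod_i sgn (P i).
Proof. exact: (big_morph _ sgnD). Qed.

Lemma normC_sqrtC_exp2n (z : algC) m :
  `|z| = sqrtC (2 ^+ m) <-> z * z^* = (2 ^ m)%:R.
Proof.
rewrite natrX -normCK; split => [->|H]; first by rewrite sqrtCK.
apply/eqP; rewrite -(eqrXn2 (n := 2)) ?sqrtC_ge0 ?normr_ge0 ?exprn_ge0 ?ler0n //.
by rewrite sqrtCK H.
Qed.

Section Character.
Variables (F : finFieldType) (n : nat).
Hypothesis hc : 2%N \in [pchar F].
Hypothesis hx : forall x : F, x ^+ (2 ^ n) = x.
Hypothesis htr : exists t : F, trb n t.

Definition chi (x : F) : algC := sgn (trb n x).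

Lemma chiD x y : chi (x + y) = chi x * chi y.
Proof. by rewrite /chi trbD // sgnD. Qed.

Lemma chi0 : chi 0 = 1.
Proof. by rewrite /chi trb0. Qed.

Lemma sum_chi (b : F) : \sum_mu chi (mu * b) = if b == 0 then #|F|%:R else 0.
Proof.
case: eqP => [->|/eqP nz].
  by under eq_bigr do rewrite mulr0 chi0; rewrite sumr_const.
have [t trt] := htr; set S := \sum_mu _.
have : S = - S.
  rewrite {1}/S (reindex_inj (addrI (t / b))) /=.
  under eq_bigr do rewrite mulrDl divfK // addrC chiD.
  by rewrite -mulr_suml /chi trt /sgn mulrN1.
by move/eqP; rewrite -addr_eq0 -mulr2n mulrn_eq0 => /eqP.
Qed.

Definition fourier (h : F -> algC) mu := \sum_x h x * chi (mu * x).

Lemma walsh_fourier (g : F -> bool) mu :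
  walsh n g mu = fourier (fun x => sgn (g x)) mu.
Proof. by apply: eq_bigr => x _; rewrite sgnD. Qed.

Lemma bentE (g : F -> bool) : #|F| = (2 ^ n)%N ->
  bent n g <-> forall mu,
    fourier (fun x => sgn (g x)) mu * (fourier (fun x => sgn (g x)) mu)^* = #|F|%:R.
Proof.
by move=> hcard; rewrite /bent hcard; split=> H mu; have := H mu;
  rewrite walsh_fourier normC_sqrtC_exp2n.
Qed.

Lemma fourier_normE h mu : fourier h mu * (fourier h mu)^* =
  \sum_a chi (mu * a) * \sum_y h (a + y) * (h y)^*.
Proof.
rewrite /fourier rmorph_sum mulr_suml.
under eq_bigr do rewrite mulr_sumr.
under [RHS]eq_bigr do rewrite mulr_sumr.
rewrite exchange_big [RHS]exchange_big /=; apply: eq_bigr => y _.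
rewrite (reindex_inj (addIr y)) /=; apply: eq_bigr => a _.
have chi_sqr : chi (mu * y) * chi (mu * y) = 1 by rewrite -chiD addrr_pchar2 ?chi0.
have conj_chi z : (chi z)^* = chi z by apply: conj_sgn.
by rewrite rmorphM /= conj_chi mulrDr chiD -[RHS]mulr1 -chi_sqr; ring.
Qed.

Section Flatness.
Variables (h u : F -> algC) (L : F -> F).
Hypothesis h_autocorr : forall a y, h (a + y) * (h y)^* = u a * chi (y * L a).
Hypothesis u0 : u 0 = 1.
Hypothesis L0 : L 0 = 0.
Hypothesis u_neq0 : forall a, u a != 0.

Lemma fourier_norm_kernel mu : fourier h mu * (fourier h mu)^* =
  \sum_a chi (mu * a) * (u a * (if L a == 0 then #|F|%:R else 0)).
Proof.
rewrite fourier_normE; apply: eq_bigr => a _.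
by under eq_bigr do rewrite h_autocorr; rewrite -mulr_sumr sum_chi.
Qed.

Lemma fourier_flat_ker :
  (forall mu, fourier h mu * (fourier h mu)^* = #|F|%:R) ->
  forall a, L a = 0 -> a = 0.
Proof.
move=> flat a La0; apply/eqP; apply: contraT => a_neq0.
have cardF_neq0 : (#|F|%:R : algC) != 0.
  by rewrite pnatr_eq0 -lt0n; apply/card_gt0P; exists 0.
pose S := \sum_mu fourier h mu * (fourier h mu)^* * chi (mu * a).
have S0 : S = 0.
  rewrite /S; under eq_bigr do rewrite flat.
  by rewrite -mulr_sumr sum_chi (negbTE a_neq0) mulr0.
(* Fourier inversion picks out the autocorrelation at a. *)
have S_ua : S = u a * #|F|%:R * #|F|%:R.
  rewrite /S; under eq_bigr do rewrite fourier_norm_kernel mulr_suml.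
  rewrite exchange_big /=; rewrite (eq_bigr (fun b =>
    u b * (if L b == 0 then #|F|%:R else 0) * (if b + a == 0 then #|F|%:R else 0))); last first.
    move=> b _; rewrite -(sum_chi (b + a)) mulr_sumr; apply: eq_bigr => mu _.
    by rewrite mulrDr chiD mulrAC mulrC.
  rewrite (bigD1 a) //= big1 => [|b /negbTE b_neq_a]; last first.
    by rewrite addr_eq0 oppr_pchar2 // b_neq_a mulr0.
  by rewrite La0 eqxx addrr_pchar2 // eqxx addr0.
move: S_ua; rewrite S0 => /esym/eqP.
by rewrite !mulf_eq0 (negbTE (u_neq0 a)) (negbTE cardF_neq0).
Qed.

Lemma ker_fourier_flat :
  (forall a, L a = 0 -> a = 0) ->
  forall mu, fourier h mu * (fourier h mu)^* = #|F|%:R.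
Proof.
move=> L_inj mu; rewrite fourier_norm_kernel (bigD1 0) //= big1 => [|a a_neq0].
  by rewrite mulr0 chi0 u0 L0 eqxx !mul1r addr0.
by case: eqP => [/L_inj a0|_]; [rewrite a0 eqxx in a_neq0 | rewrite !mulr0].
Qed.

Lemma fourier_flat_iff :
  (forall mu, fourier h mu * (fourier h mu)^* = #|F|%:R) <-> (forall a, L a = 0 -> a = 0).
Proof. by split; [apply: fourier_flat_ker | apply: ker_fourier_flat]. Qed.

End Flatness.
End Character.

Section SelfDualCoordinates.
Variables (F : finFieldType) (n : nat).
Hypothesis hc : 2%N \in [pchar F].
Hypothesis hcard : #|F| = (2 ^ n)%N.
Variable alpha : 'I_n -> F.
Hypothesis hsd : self_dual alpha.

Let hx (x : F) : x ^+ (2 ^ n) = x.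
Proof. by rewrite -hcard expf_card. Qed.

Definition coord i (x : F) := trb n (x * alpha i).

Definition of_coords (c : {ffun 'I_n -> bool}) : F := \sum_(i < n) (c i)%:R * alpha i.

Lemma tr_of_coordsM c j : tr n (of_coords c * alpha j) = (c j)%:R.
Proof.
rewrite mulr_suml tr_sum // (bigD1 j) //= big1 => [|i /negbTE i_neq_j].
  by rewrite -mulrA tr_natbM // hsd eqxx mulr1 addr0.
by rewrite -mulrA tr_natbM // hsd i_neq_j mulr0.
Qed.

Lemma of_coords_inj : injective of_coords.
Proof.
move=> c d cd; apply/ffunP => j; apply: (natr_bool_inj (R := F)).
by rewrite -tr_of_coordsM cd tr_of_coordsM.
Qed.

Lemma coordsK (x : F) : of_coords [ffun i => coord i x] = x.
Proof.
have : x \in codom of_coords.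
  apply: inj_card_onto; first exact: of_coords_inj.
  by rewrite card_ffun card_bool card_ord hcard.
case/codomP => c ->; congr of_coords; apply/ffunP => j.
by rewrite ffunE; apply: (natr_bool_inj (R := F)); rewrite -tr_trb // tr_of_coordsM.
Qed.

Lemma wt_coord (x : F) : wt alpha x = #|[set i | coord i x]|.
Proof.
rewrite /wt; case: pickP => [c /eqP xE | no_coords].
  have -> : c = [ffun i => coord i x] by apply: of_coords_inj; rewrite coordsK xE.
  by apply: eq_card => i; rewrite !inE ffunE.
by have := no_coords [ffun i => coord i x]; rewrite -/(of_coords _) coordsK eqxx.
Qed.

Definition iwt (x : F) : algC := 'i ^+ wt alpha x.

Lemma nega_walsh_fourier (g : F -> bool) mu :
  nega_walsh alpha g mu = fourier n (fun x => sgn (g x) * iwt x) mu.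
Proof. by apply: eq_bigr => x _; rewrite sgnD mulrAC. Qed.

Lemma negabentE (g : F -> bool) : negabent alpha g <-> forall mu,
  fourier n (fun x => sgn (g x) * iwt x) mu * (fourier n (fun x => sgn (g x) * iwt x) mu)^*
    = #|F|%:R.
Proof.
by rewrite /negabent hcard; split=> H mu; have := H mu;
  rewrite nega_walsh_fourier normC_sqrtC_exp2n.
Qed.

Lemma iwt_prod x : iwt x = \prod_i (if coord i x then 'i else 1).
Proof.
rewrite /iwt wt_coord -prodr_const big_mkcond /=.
by apply: eq_bigr => i _; rewrite inE.
Qed.

Lemma sgn_trbM_coord (y a : F) :
  sgn (trb n (y * a)) = \prod_i sgn (coord i a && coord i y).
Proof.
have trbM_coord : tr n (y * a) = (\big[addb/false]_i (coord i a && coord i y))%:R.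
  rewrite -{1}(coordsK a) mulr_sumr tr_sum // -natr_big_addb //.
  apply: eq_bigr => i _; rewrite mulrCA tr_natbM // tr_trb // ffunE.
  by case: (coord i a); rewrite ?mul1r ?mul0r.
by rewrite /trb trbM_coord natr_bool_eq0 negbK sgn_xor.
Qed.

(* Coordinatewise, i^(u+v-2uv) i^(-v) = i^u (-1)^(uv) for bits u, v; self-duality
   turns the product of the (-1)^(u_i v_i) into (-1)^Tr(a y). *)
Lemma iwt_shift a y : iwt (a + y) * (iwt y)^* = iwt a * sgn (trb n (y * a)).
Proof.
rewrite !iwt_prod rmorph_prod -big_split sgn_trbM_coord -big_split /=.
apply: eq_bigr => i _; rewrite /coord mulrDl trbD // -/(coord i a) -/(coord i y).
case: (coord i a); case: (coord i y);
  rewrite /sgn /= ?rmorph1 ?conjCi ?mulr1 ?mul1r ?mulrN1 ?mulrN -?expr2 ?sqrCi ?opprK //.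
Qed.

Lemma iwt0 : iwt 0 = 1.
Proof. by rewrite iwt_prod big1 // => i _; rewrite /coord mul0r trb0. Qed.

Lemma iwt_neq0 x : iwt x != 0.
Proof. by rewrite expf_neq0 // neq0Ci. Qed.

End SelfDualCoordinates.

Section QuadraticForm.
Variables (F : finFieldType) (k : nat).
Hypothesis hc : 2%N \in [pchar F].
Hypothesis hcard : #|F| = (2 ^ (2 * k))%N.
Hypothesis htr : exists t : F, trb (2 * k) t.
Variable lam : F.

Let q := (2 ^ k)%N.
Let c := lam + lam ^+ q.

Let hx (x : F) : x ^+ (2 ^ (2 * k)) = x.
Proof. by rewrite -hcard expf_card. Qed.

Definition quad (x : F) := trb (2 * k) (lam * x ^+ q.+1).

Lemma exprqK (x : F) : (x ^+ q) ^+ q = x.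
Proof. by rewrite -exprM -expnD addnn -mul2n hx. Qed.

Lemma quad_shift a y :
  quad (a + y) (+) quad y = quad a (+) trb (2 * k) (y * (a ^+ q * c)).
Proof.
rewrite /quad -!trbD //; congr (_ != 0).
rewrite !exprS expr2nD //.
have -> : lam * ((a + y) * (a ^+ q + y ^+ q)) + lam * (y * y ^+ q) =
  lam * (a * a ^+ q) + y * a ^+ q * lam + lam * y ^+ q * a
  + (lam * (y * y ^+ q) + lam * (y * y ^+ q)) by ring.
rewrite addrr_pchar2 // addr0 !trD // -(tr_exp2n hx (lam * y ^+ q * a) k) -/q.
rewrite !exprMn exprqK /c !mulrDr !trD // -addrA; congr (_ + (tr _ _ + tr _ _)); ring.
Qed.

Lemma ker_scale_frob : (forall a : F, a ^+ q * c = 0 -> a = 0) <-> c != 0.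
Proof.
split => [H | c_neq0 a /eqP].
  by apply/eqP => c0; have := H 1; rewrite c0 mulr0 => /(_ erefl) /eqP; rewrite oner_eq0.
by rewrite mulf_eq0 (negbTE c_neq0) orbF expf_eq0 => /andP[_ /eqP].
Qed.

(* c^q = c, so a^q c = a forces a c = a^q by applying the Frobenius x |-> x^q,
   whence a = a c^2 and c = 1. *)
Lemma ker_scale_frob_add : (forall a : F, a ^+ q * c + a = 0 -> a = 0) <-> c != 1.
Proof.
split => [H | c_neq1 a].
  apply/eqP => c1; have := H 1; rewrite c1 expr1n mulr1 addrr_pchar2 //.
  by move=> /(_ erefl) /eqP; rewrite oner_eq0.
move/eqP; rewrite addr_eq0 oppr_pchar2 // => /eqP aqc; apply/eqP; apply: contraT => a_neq0.
have cq : c ^+ q = c by rewrite /c expr2nD // exprqK addrC.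
have acq : a * c = a ^+ q by rewrite -{1}[a]exprqK -cq -exprMn aqc.
have c2 : c * c = 1 by apply: (mulfI a_neq0); rewrite mulr1 mulrA acq aqc.
move: c_neq1; have : (c + 1) ^+ 2 = 0.
  by rewrite sqrrD mulr2n addrr_pchar2 // addr0 expr1n expr2 c2 addrr_pchar2.
by move/eqP; rewrite expf_eq0 /= addr_eq0 oppr_pchar2 // => ->.
Qed.

Lemma quad0 : quad 0 = false.
Proof. by rewrite /quad expr0n /= mulr0 trb0. Qed.

Lemma bent_quad : bent (2 * k) quad <-> c != 0.
Proof.
apply: (iff_trans (bentE quad hcard)); apply: (iff_trans _ ker_scale_frob).
apply: (fourier_flat_iff hc hx htr (u := fun a => sgn (quad a))).
- by move=> a y; rewrite conj_sgn -sgnD quad_shift sgnD.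
- by rewrite quad0.
- by rewrite expr0n expn_eq0 mul0r.
- by move=> a; apply: sgn_neq0.
Qed.

Variable alpha : 'I_(2 * k) -> F.
Hypothesis hsd : self_dual alpha.

Lemma negabent_quad : negabent alpha quad <-> c != 1.
Proof.
apply: (iff_trans (negabentE hcard alpha quad)).
apply: (iff_trans _ ker_scale_frob_add).
apply: (fourier_flat_iff hc hx htr (u := fun a => sgn (quad a) * iwt alpha a)).
- move=> a y; rewrite rmorphM /= conj_sgn; transitivity
    (sgn (quad (a + y)) * sgn (quad y) * (iwt alpha (a + y) * (iwt alpha y)^*)).
    by ring.
  by rewrite -sgnD quad_shift sgnD iwt_shift // [y * (_ + a)]mulrDr chiD // /chi; ring.
- by rewrite quad0 iwt0 // mulr1.
- by rewrite expr0n expn_eq0 mul0r add0r.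
- by move=> a; rewrite mulf_neq0 ?sgn_neq0 ?iwt_neq0.
Qed.

End QuadraticForm.

Lemma self_dual_trb (F : finFieldType) n (alpha : 'I_n -> F) :
  (0 < n)%N -> self_dual alpha -> exists t : F, trb n t.
Proof.
move=> n_gt0 hsd; exists (alpha (Ordinal n_gt0) * alpha (Ordinal n_gt0)).
by rewrite /trb hsd eqxx oner_eq0.
Qed.

Unset Implicit Arguments.

Theorem proposition5 (F : finFieldType) (k : nat) (hk : (0 < k)%N)
  (hchar : 2%N \in [pchar F]) (hcard : #|F| = (2 ^ (2 * k))%N)
  (alpha : 'I_(2 * k) -> F) (hsd : self_dual alpha) (lam : F) :
  let f := fun x : F => trb (2 * k) (lam * x ^+ (2 ^ k).+1) in
  (negabent alpha f <-> lam + lam ^+ (2 ^ k) != 1) /\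
  (bent_negabent alpha f <-> (lam + lam ^+ (2 ^ k) != 0) && (lam + lam ^+ (2 ^ k) != 1)).
Proof.
move=> f.
have htr : exists t : F, trb (2 * k) t by apply: (self_dual_trb _ hsd); rewrite muln_gt0.
have HN := negabent_quad hchar hcard htr lam hsd.
have HB := bent_quad hchar hcard htr lam.
split; first exact: HN.
rewrite /bent_negabent; split=> [[/HB -> /HN ->] // | /andP[/HB bentf /HN negabentf]].
by split.
Qed.
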